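(* Let $|\text{-}|:\mathcal E\to\mathcal B$ be a concrete category which is cofibred over $\mathcal B$ and such that the $\mathcal Q_{\mathcal B}$-category $\overline{\mathcal E}$ is conically cocomplete. Then $\overline{\mathcal E}$ is tensored.
   Context: $\mathcal B$ has small hom-sets; $|\text{-}|$ is faithful; a map $f:|X|\to|Y|$ is an $\mathcal E$-morphism if it is $|f'|$ for some $f':X\to Y$; $\overline{\mathcal E}(X,Y)$ is the set of $\mathcal E$-morphisms $|X|\to|Y|$. For $\mathbf f\subseteq\mathcal B(S,T)$, $\mathbf h\subseteq\mathcal B(S,U)$ put $\mathbf h\swarrow\mathbf f=\{g\in\mathcal B(T,U)\mid\forall f\in\mathbf f:g\circ f\in\mathbf h\}$. $\mathcal E$ is cofibred if for every $X$ and map $f:|X|\to T$ there is $f\star X$ with $|f\star X|=T$ such that $g:T\to|Z|$ is an $\mathcal E$-morphism $f\star X\to Z$ iff $g\circ f$ is an $\mathcal E$-morphism $X\to Z$. The fibre $\mathcal E_T$ is the class of $Y$ with $|Y|=T$. A presheaf of extent $T$ on $\overline{\mathcal E}$ is a family of subsets $\varphi_X\subseteq\mathcal B(|X|,T)$ ($X\in\mathrm{ob}\,\mathcal E$) with $\varphi_X\circ\overline{\mathcal E}(X',X)\subseteq\varphi_{X'}$; a supremum of it is $Y$ with $|Y|=T$ and $\overline{\mathcal E}(Y,Z)=\bigcap_X\overline{\mathcal E}(X,Z)\swarrow\varphi_X$ for all $Z$. $\overline{\mathcal E}$ is conically cocomplete if for every $T$ and every (possibly large) family $(Y_i)_{i\in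 I}$ in $\mathcal E_T$, the presheaf $\varphi_X=\bigcup_i\overline{\mathcal E}(X,Y_i)$ has a supremum. $\overline{\mathcal E}$ is tensored if for every $X$ and every subset $\mathbf u\subseteq\mathcal B(|X|,T)$ there is $Y$ with $|Y|=T$ and $\overline{\mathcal E}(Y,Z)=\overline{\mathcal E}(X,Z)\swarrow\mathbf u$ for all $Z$. *)

Set Implicit Arguments.

Record Category := {
  Ob :> Type;
  Hom : Ob -> Ob -> Type;
  idm : forall A, Hom A A;
  comp : forall A B C, Hom B C -> Hom A B -> Hom A C;
  comp_assoc : forall A B C D (h : Hom C D) (g : Hom B C) (f : Hom A B),
      comp h (comp g f) = comp (comp h g) f;
  comp_idl : forall A B (f : Hom A B), comp (idm B) f = f;
  comp_idr : forall A B (f : Hom A B), comp f (idm A) = f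
}.

Arguments Hom {c}.
Arguments idm {c}.
Arguments comp {c A B C}.

Record Functor (E B : Category) := {
  fobj :> Ob E -> Ob B;
  fmap : forall X Y, Hom X Y -> Hom (fobj X) (fobj Y);
  fmap_id : forall X : Ob E, fmap X X (idm X) = idm (fobj X);
  fmap_comp : forall (X Y Z : Ob E) (g : Hom Y Z) (f : Hom X Y),
      fmap X Z (comp g f) = comp (fmap Y Z g) (fmap X Y f)
}.

Arguments fmap {E B} f {X Y} : rename.

Definition faithful {E B : Category} (F : Functor E B) : Prop :=
  forall X Y (f g : Hom X Y), fmap F f = fmap F g -> f = g.

Definition castl {B : Category} {A A' C : Ob B} (e : A = A') (g : Hom A' C)
  : Hom A C :=
  match e in _ = A0 return Hom A0 C -> Hom A C with
  | eq_refl => fun g => g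
  end g.

Definition castr {B : Category} {A C C' : Ob B} (e : C = C') (h : Hom A C')
  : Hom A C :=
  match e in _ = C0 return Hom A C0 -> Hom A C with
  | eq_refl => fun h => h
  end h.

(* f : |X| -> |Y| is an E-morphism X -> Y, i.e. f belongs to Ebar(X,Y) *)
Definition Emor {E B : Category} (F : Functor E B) (X Y : Ob E)
  (f : Hom (F X) (F Y)) : Prop :=
  exists f' : Hom X Y, fmap F f' = f.

(* cofibred: for every X and f : |X| -> T there is f*X in the fibre over T
   with  g : T -> |Z| an E-morphism f*X -> Z  iff  g o f is one X -> Z *)
Definition cofibred {E B : Category} (F : Functor E B) : Prop :=
  forall (X : Ob E) (T : Ob B) (f : Hom (F X) T),
    exists (Y : Ob E) (e : F Y = T),
      forall (Z : Ob E) (g : Hom T (F Z)),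
        Emor F Y Z (castl e g) <-> Emor F X Z (comp g f).

(* Ebar conically cocomplete: for every T and every (possibly large) family
   (Y_i) in the fibre E_T, the presheaf phi_X = U_i Ebar(X,Y_i) of extent T
   has a supremum Y, i.e. |Y| = T and
   Ebar(Y,Z) = /\_X Ebar(X,Z) <swarrow phi_X  for all Z. *)
Definition conically_cocomplete {E B : Category} (F : Functor E B) : Prop :=
  forall (T : Ob B) (I : Type) (Yf : I -> Ob E) (eY : forall i, F (Yf i) = T),
    let phi := fun (X : Ob E) (h : Hom (F X) T) =>
                 exists i : I, Emor F X (Yf i) (castr (eY i) h) in
    exists (Y : Ob E) (e : F Y = T),
      forall (Z : Ob E) (g : Hom T (F Z)),
        Emor F Y Z (castl e g) <->
        (forall (X : Ob E) (h : Hom (F X) T), phi X h -> Emor F X Z (comp g h)).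

(* Ebar tensored: for every X and every subset u of B(|X|,T) there is Y with
   |Y| = T and Ebar(Y,Z) = Ebar(X,Z) <swarrow u  for all Z. *)
Definition tensored {E B : Category} (F : Functor E B) : Prop :=
  forall (X : Ob E) (T : Ob B) (u : Hom (F X) T -> Prop),
    exists (Y : Ob E) (e : F Y = T),
      forall (Z : Ob E) (g : Hom T (F Z)),
        Emor F Y Z (castl e g) <->
        (forall f : Hom (F X) T, u f -> Emor F X Z (comp g f)).

(** The tensor of X with a set u of maps |X| -> T is the supremum, in the fibre
    over T, of the cocartesian lifts f*X for f in u: a map g : T -> |Z| is an
    E-morphism out of each f*X exactly when every g o f is one out of X, and
    conical cocompleteness provides that supremum. *)

From Stdlib Require Import ClassicalEpsilon.

Lemma castr_comp {B : Category} {A T C : Ob B} (e : A = T) (h : Hom C T) :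
  castr e h = comp (castr e (idm T)) h.
Proof. destruct e; simpl; now rewrite comp_idl. Qed.

Lemma castl_castr_id {B : Category} {A T : Ob B} (e : A = T) :
  castl e (castr e (idm T)) = idm A.
Proof. now destruct e. Qed.

Lemma comp_castl_castr {B : Category} {A T C D : Ob B} (e : A = T)
  (g : Hom T C) (h : Hom D T) :
  comp (castl e g) (castr e h) = comp g h.
Proof. now destruct e. Qed.

Section Cocartesian.

Context {E B : Category} {F : Functor E B}.

Lemma Emor_id (X : Ob E) : Emor F X X (idm (F X)).
Proof. exists (idm X); apply fmap_id. Qed.

Lemma Emor_comp (X Y Z : Ob E) (g : Hom (F Y) (F Z)) (f : Hom (F X) (F Y)) :
  Emor F Y Z g -> Emor F X Y f -> Emor F X Z (comp g f).
Proof.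
  intros [g' <-] [f' <-]; exists (comp g' f'); apply fmap_comp.
Qed.

Definition cocartesian {X : Ob E} {T : Ob B} (f : Hom (F X) T)
  (Y : Ob E) (e : F Y = T) : Prop :=
  forall (Z : Ob E) (g : Hom T (F Z)),
    Emor F Y Z (castl e g) <-> Emor F X Z (comp g f).

Lemma cofibred_lift (Hcof : cofibred F) {X : Ob E} {T : Ob B}
  (f : Hom (F X) T) : {Y : Ob E & {e : F Y = T | cocartesian f Y e}}.
Proof.
  destruct (constructive_indefinite_description _ (Hcof X T f)) as [Y HY].
  destruct (constructive_indefinite_description _ HY) as [e He].
  exact (existT _ Y (exist _ e He)).
Qed.

Lemma cocartesian_unit {X : Ob E} {T : Ob B} {f : Hom (F X) T}
  {Y : Ob E} {e : F Y = T} :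
  cocartesian f Y e -> Emor F X Y (castr e f).
Proof.
  intros Hlift; rewrite castr_comp; apply Hlift.
  rewrite castl_castr_id; apply Emor_id.
Qed.

Lemma cocone_over_lifts_iff (X : Ob E) (T : Ob B)
  (u : Hom (F X) T -> Prop) (Yf : {f | u f} -> Ob E)
  (eY : forall i, F (Yf i) = T)
  (Hlift : forall i, cocartesian (proj1_sig i) (Yf i) (eY i))
  (Z : Ob E) (g : Hom T (F Z)) :
  (forall (X' : Ob E) (h : Hom (F X') T),
     (exists i, Emor F X' (Yf i) (castr (eY i) h)) -> Emor F X' Z (comp g h))
  <-> (forall f, u f -> Emor F X Z (comp g f)).
Proof.
  split.
  - intros Hcocone f uf.
    apply Hcocone; exists (exist _ f uf).
    exact (cocartesian_unit (Hlift (exist _ f uf))).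
  - intros Hg X' h [i Hh].
    rewrite <- (comp_castl_castr (eY i) g h).
    apply Emor_comp; [apply (Hlift i), Hg, proj2_sig | exact Hh].
Qed.

End Cocartesian.

Theorem corollary4p8 (E B : Category) (F : Functor E B)
  (HF : faithful F) (Hcof : cofibred F) (Hcc : conically_cocomplete F) :
  tensored F.
Proof.
  intros X T u.
  pose (lift := fun i : {f | u f} => cofibred_lift Hcof (proj1_sig i)).
  pose (Yf := fun i => projT1 (lift i)).
  pose (eY := fun i => proj1_sig (projT2 (lift i))).
  destruct (Hcc T _ Yf eY) as [Y [e Hsup]].
  exists Y, e; intros Z g.
  rewrite Hsup.
  apply cocone_over_lifts_iff.
  intro i; exact (proj2_sig (projT2 (lift i))).
Qed.
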